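(* Let $\mathbb{E}$ be a Boolean algebra and $\mathbb{M}$ a meadow, and consider conditional values in $\mathbb{CV}(\mathbb{E},\mathbb{M})$. Let $X=\sum_{i=1}^n e_i\!:\to v(t_i)$ and $Y=\sum_{j=1}^m f_j\!:\to v(r_j)$ with $e_i,f_j\in\mathbb{E}$ and $t_i,r_j\in\mathbb{M}$. Then $$X\cdot Y=\sum_{i=1}^n\sum_{j=1}^m (e_i\wedge f_j)\!:\to v(t_i\cdot r_j).$$ Moreover, if $X$ and $Y$ are given in nonoverlapping form (i.e. $e_i\wedge e_{i'}=\bot$ for all $i\neq i'$ and $f_j\wedge f_{j'}=\bot$ for all $j\neq j'$), then the displayed expression for $X\cdot Y$ is also nonoverlapping (i.e. $(e_i\wedge f_j)\wedge(e_{i'}\wedge f_{j'})=\bot$ whenever $(i,j)\neq(i',j')$).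
   Context: A meadow is a commutative ring with unit equipped with a total unary inverse ${}^{-1}$ satisfying $(x^{-1})^{-1}=x$ and $x\cdot(x\cdot x^{-1})=x$. Boolean algebras are written $(E,\vee,\wedge,\neg,\top,\bot)$. CV terms are closed terms built from $v(m)$ ($m\in\mathbb{M}$), $-X$, $X^{-1}$, $X+Y$, $X\cdot Y$, and $e\!:\to X$ ($e\in\mathbb{E}$). Fixing a Stone representation $\phi:\mathbb{E}\to W\subseteq\mathcal{P}(S)$ (an isomorphism onto a field of subsets of a set $S$), each CV term $X$ denotes a map $[\![X]\!]:S\to M$ defined pointwise for $v(m)$ (constant $m$), $-,{}^{-1},+,\cdot$, and $[\![e\!:\to X]\!](s)=[\![X]\!](s)$ if $s\in\phi(e)$ and $0$ otherwise. $\mathbb{CV}(\mathbb{E},\mathbb{M})$ is the set of CV terms modulo equality of these maps, and equality of CVs means equality in $\mathbb{CV}(\mathbb{E},\mathbb{M})$. An expression $\sum_{i=1}^n e_i\!:\to v(t_i)$ is called a flat CV expression. *)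

From HB Require Import structures.
From mathcomp Require Import all_boot all_order all_algebra.
Set Implicit Arguments. Unset Strict Implicit. Unset Printing Implicit Defensive.
Import Order.TTheory GRing.Theory.
Local Open Scope ring_scope.

(* A meadow: a commutative ring with unit (possibly trivial) together with a
   total unary inverse satisfying (x^-1)^-1 = x and x * (x * x^-1) = x. *)
Record meadow_inv (M : comPzRingType) := MeadowInv {
  minv : M -> M;
  minvK : forall x, minv (minv x) = x;
  mrestr : forall x, x * (x * minv x) = x
}.

(* Boolean algebras: complemented distributive lattices with top and bottom
   (Order.ctbDistrLatticeType). *)

Inductive cvterm (E M : Type) : Type :=
| cv_v   : M -> cvterm E M
| cv_opp : cvterm E M -> cvterm E M
| cv_inv : cvterm E M -> cvterm E M
| cv_add : cvterm E M -> cvterm E M -> cvterm E M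
| cv_mul : cvterm E M -> cvterm E M -> cvterm E M
| cv_cond : E -> cvterm E M -> cvterm E M.

(* phi : E -> pred S is a Stone representation: an injective Boolean algebra
   homomorphism onto a field of subsets of S (hence an isomorphism onto its
   image W). *)
Definition stone_rep (d : Order.disp_t) (E : ctbDistrLatticeType d) (S : Type)
  (phi : E -> pred S) : Prop :=
  injective phi /\
  [/\ (forall a b s, phi (Order.meet a b) s = phi a s && phi b s),
      (forall a b s, phi (Order.join a b) s = phi a s || phi b s),
      (forall a s, phi (Order.compl a) s = ~~ phi a s),
      (forall s, phi Order.top s = true) &
      (forall s, phi Order.bottom s = false)].

Fixpoint cv_den (d : Order.disp_t) (E : ctbDistrLatticeType d)
  (M : comPzRingType) (mi : meadow_inv M) (S : Type) (phi : E -> pred S)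
  (X : cvterm E M) (s : S) : M :=
  match X with
  | cv_v m => m
  | cv_opp X1 => - cv_den mi phi X1 s
  | cv_inv X1 => minv mi (cv_den mi phi X1 s)
  | cv_add X1 X2 => cv_den mi phi X1 s + cv_den mi phi X2 s
  | cv_mul X1 X2 => cv_den mi phi X1 s * cv_den mi phi X2 s
  | cv_cond e X1 => if phi e s then cv_den mi phi X1 s else 0
  end.

Definition cv_eq (d : Order.disp_t) (E : ctbDistrLatticeType d)
  (M : comPzRingType) (mi : meadow_inv M) (S : Type) (phi : E -> pred S)
  (X Y : cvterm E M) : Prop :=
  forall s, cv_den mi phi X s = cv_den mi phi Y s.

Fixpoint cv_sum (E M : Type) (z : M) (l : seq (cvterm E M)) : cvterm E M :=
  match l with
  | [::] => cv_v E z
  | [:: x] => x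
  | x :: l' => cv_add x (cv_sum z l')
  end.

Definition cvsum (E : Type) (M : comPzRingType) (l : seq (cvterm E M)) :=
  cv_sum 0 l.

Definition flat_cv (E : Type) (M : comPzRingType) (n : nat)
  (e : 'I_n -> E) (t : 'I_n -> M) : cvterm E M :=
  cvsum [seq cv_cond (e i) (cv_v E (t i)) | i <- enum 'I_n].

From mathcomp Require Import all_boot all_order all_algebra.
Import Order.LTheory GRing.Theory.
Local Open Scope ring_scope.

Lemma meet_disjoint_pairs (d : Order.disp_t) (L : bMeetSemilatticeType d)
    (I J : eqType) (e : I -> L) (f : J -> L) :
  (forall i i', i != i' -> Order.meet (e i) (e i') = Order.bottom) ->
  (forall j j', j != j' -> Order.meet (f j) (f j') = Order.bottom) ->
  forall i i' j j', (i, j) != (i', j') ->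
    Order.meet (Order.meet (e i) (f j)) (Order.meet (e i') (f j'))
      = Order.bottom.
Proof.
move=> e_disj f_disj i i' j j' neq_ij; rewrite meetACA.
have [eq_i|/e_disj->] := eqVneq i i'; last exact: meet0x.
have neq_j : j != j' by move: neq_ij; rewrite eq_i xpair_eqE eqxx.
by rewrite f_disj ?meetx0.
Qed.

Section FlatProduct.

Variables (d : Order.disp_t) (E : ctbDistrLatticeType d) (M : comPzRingType).
Variables (mi : meadow_inv M) (S : Type) (phi : E -> pred S).

Lemma cvsum_den (l : seq (cvterm E M)) s :
  cv_den mi phi (cvsum l) s = \sum_(X <- l) cv_den mi phi X s.
Proof.
rewrite /cvsum; elim: l => [|X [|Y l] IH]; first by rewrite big_nil.
  by rewrite big_seq1.
by rewrite [cv_sum _ _]/= big_cons -IH.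
Qed.

Lemma flat_cv_den n (e : 'I_n -> E) (t : 'I_n -> M) s :
  cv_den mi phi (flat_cv e t) s = \sum_i (if phi (e i) s then t i else 0).
Proof. by rewrite cvsum_den big_map big_enum. Qed.

Hypothesis phi_meet : forall a b s, phi (Order.meet a b) s = phi a s && phi b s.

Lemma flat_cv_mul n m (e : 'I_n -> E) (t : 'I_n -> M)
    (f : 'I_m -> E) (r : 'I_m -> M) :
  cv_eq mi phi
    (cv_mul (flat_cv e t) (flat_cv f r))
    (cvsum [seq cvsum [seq cv_cond (Order.meet (e i) (f j)) (cv_v E (t i * r j))
                       | j <- enum 'I_m] | i <- enum 'I_n]).
Proof.
move=> s /=; rewrite !flat_cv_den cvsum_den big_map big_enum big_distrl /=.
apply: eq_bigr => i _; rewrite cvsum_den big_map big_enum big_distrr /=.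
apply: eq_bigr => j _; rewrite phi_meet.
by case: (phi (e i) s); case: (phi (f j) s); rewrite ?mul0r ?mulr0.
Qed.

End FlatProduct.

Theorem mainTheorem2 (d : Order.disp_t) (E : ctbDistrLatticeType d)
  (M : comPzRingType) (mi : meadow_inv M) (S : Type) (phi : E -> pred S)
  (Hphi : stone_rep phi)
  (n m : nat) (e : 'I_n -> E) (t : 'I_n -> M) (f : 'I_m -> E) (r : 'I_m -> M) :
  cv_eq mi phi
    (cv_mul (flat_cv e t) (flat_cv f r))
    (cvsum [seq cvsum [seq cv_cond (Order.meet (e i) (f j)) (cv_v E (t i * r j))
                       | j <- enum 'I_m] | i <- enum 'I_n])
  /\
  ((forall i i' : 'I_n, i != i' -> Order.meet (e i) (e i') = Order.bottom) ->
   (forall j j' : 'I_m, j != j' -> Order.meet (f j) (f j') = Order.bottom) ->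
   forall (i i' : 'I_n) (j j' : 'I_m), (i, j) != (i', j') ->
     Order.meet (Order.meet (e i) (f j)) (Order.meet (e i') (f j'))
       = Order.bottom).
Proof.
have [_ [phi_meet _ _ _ _]] := Hphi.
split; first exact: flat_cv_mul.
exact: meet_disjoint_pairs.
Qed.
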